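(* Let $k\ge 0$ and let $G$ be a $B_k$-EPG graph on $n$ vertices with clique number $\omega(G)$. Then $G$ has at most $(k+1)(\omega(G)-1)\,n$ edges.
   Context: A graph $G$ is a $B_k$-EPG graph if each vertex $u$ can be assigned a path $P_u$ in the planar orthogonal grid with at most $k$ bends (turns) such that $uv\in E(G)$ if and only if $P_u$ and $P_v$ share at least one grid edge. $\omega(G)$ denotes the maximum size of a clique of $G$. *)

From mathcomp Require Import all_boot all_order all_algebra.
Set Implicit Arguments. Unset Strict Implicit. Unset Printing Implicit Defensive.
Import Order.TTheory GRing.Theory Num.Theory.

Definition point := (int * int)%type.

Definition dir (a b : point) : point := ((b.1 - a.1)%R, (b.2 - a.2)%R).

Definition grid_adj (a b : point) : bool :=
  dir a b \in [:: (1%R, 0%R); ((-1)%R, 0%R); (0%R, 1%R); (0%R, (-1)%R)].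

Definition steps (p : seq point) : seq (point * point) := zip p (behead p).

Definition grid_path (p : seq point) : bool :=
  [&& size p > 0, uniq p & all (fun ab => grid_adj ab.1 ab.2) (steps p)].

Definition bends (p : seq point) : nat :=
  let ds := map (fun ab => dir ab.1 ab.2) (steps p) in
  count (fun dd => dd.1 != dd.2) (zip ds (behead ds)).

Definition share_edge (p q : seq point) : bool :=
  has (fun ab => (ab \in steps q) || ((ab.2, ab.1) \in steps q)) (steps p).

Definition simple_graph (T : finType) (e : rel T) : Prop :=
  symmetric e /\ irreflexive e.

Definition Bk_EPG (k : nat) (T : finType) (e : rel T) : Prop :=
  exists P : T -> seq point,
    (forall u, grid_path (P u) /\ bends (P u) <= k) /\
    (forall u v, u != v -> (e u v <-> share_edge (P u) (P v))).

Definition is_clique (T : finType) (e : rel T) (A : {set T}) : bool :=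
  [forall x in A, forall y in A, (x != y) ==> e x y].

Definition clique_number (T : finType) (e : rel T) : nat :=
  \max_(A : {set T} | is_clique e A) #|A|.

Definition edge_set (T : finType) (e : rel T) : {set {set T}} :=
  [set A : {set T} | [exists x, exists y, e x y && (A == [set x; y])]].

Definition num_edges (T : finType) (e : rel T) : nat := #|edge_set e|.

From mathcomp Require Import all_boot all_order all_algebra zify.
Set Implicit Arguments. Unset Strict Implicit. Unset Printing Implicit Defensive.
Import Order.TTheory GRing.Theory Num.Theory.

(* Cut every path into its maximal straight runs; a path with at most k bends
   has at most k + 1 of them.  Orient each grid edge upwards, i.e. towards
   larger x + y, so that every run has a lowest edge, its start.  If the paths
   of u and v share an edge, take the lowest shared edge: its predecessor on
   the line cannot lie on both paths, so it starts a run of P_u lying on P_v or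
   a run of P_v lying on P_u.  Charge the edge uv to that run start.  All
   paths through a fixed edge of P_w, together with w, form a clique, so each
   of the at most (k + 1) n run starts is charged at most omega - 1 times. *)

Definition grid_walk (p : seq point) : bool :=
  all (fun ab => grid_adj ab.1 ab.2) (steps p).

Definition covers (q : seq point) (ab : point * point) : bool :=
  (ab \in steps q) || ((ab.2, ab.1) \in steps q).

Section GridEdges.
Local Open Scope ring_scope.

Definition height (a : point) : int := a.1 + a.2.

Definition orient (ab : point * point) : point * point :=
  if height ab.1 < height ab.2 then ab else (ab.2, ab.1).

Definition mirror (c a : point) : point := (2 * c.1 - a.1, 2 * c.2 - a.2).

(* The collinear grid edge just below [ab]. *)
Definition prev_edge (ab : point * point) : point * point :=
  (mirror (orient ab).1 (orient ab).2, (orient ab).1).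

Definition edge_height (ab : point * point) : int := height (orient ab).1.

Lemma grid_adj_height (a b : point) :
  grid_adj a b -> (height a < height b) || (height b < height a).
Proof.
case: a b => [a1 a2] [b1 b2]; rewrite /grid_adj /dir /height /= !inE.
by case/or4P => /eqP [] h1 h2; apply/orP; lia.
Qed.

Lemma orient_lt (a b : point) : height a < height b -> orient (a, b) = (a, b).
Proof. by rewrite /orient /= => ->. Qed.

Lemma orient_gt (a b : point) : height b < height a -> orient (a, b) = (b, a).
Proof. by rewrite /orient /= => /ltW; rewrite leNgt => /negbTE ->. Qed.

Lemma orient_rev (a b : point) : grid_adj a b -> orient (b, a) = orient (a, b).
Proof.
by move=> /grid_adj_height /orP [] h; rewrite (orient_lt h) (orient_gt h).
Qed.

Lemma prev_edge_rev (a b : point) : grid_adj a b -> prev_edge (b, a) = prev_edge (a, b).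
Proof. by move=> ab; rewrite /prev_edge orient_rev. Qed.

Lemma edge_height_rev (a b : point) : grid_adj a b -> edge_height (b, a) = edge_height (a, b).
Proof. by move=> ab; rewrite /edge_height orient_rev. Qed.

Lemma height_mirror (c a : point) : height (mirror c a) = 2 * height c - height a.
Proof. by rewrite /height /mirror /=; lia. Qed.

Lemma edge_height_prev (a b : point) :
  grid_adj a b -> edge_height (prev_edge (a, b)) < edge_height (a, b).
Proof.
have below (c d : point) : height c < height d -> height (mirror c d) < height c.
  by rewrite height_mirror; lia.
move=> /grid_adj_height /orP [] h;
  by rewrite /edge_height /prev_edge ?(orient_lt h) ?(orient_gt h) /= orient_lt /=;
  exact: below.
Qed.

Lemma prev_edge_straight_up (a b c : point) :
  dir a b = dir b c -> height a < height b -> prev_edge (b, c) = (a, b).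
Proof.
case: a b c => [a1 a2] [b1 b2] [c1 c2]; rewrite /dir /height /= => -[] h1 h2 ab.
rewrite /prev_edge orient_lt /mirror /height /=; last by lia.
by congr ((_, _), _); lia.
Qed.

Lemma prev_edge_straight_down (a b c : point) :
  dir a b = dir b c -> height b < height a -> prev_edge (a, b) = (c, b).
Proof.
case: a b c => [a1 a2] [b1 b2] [c1 c2]; rewrite /dir /height /= => -[] h1 h2 ba.
rewrite /prev_edge orient_gt /mirror /height /=; last by lia.
by congr ((_, _), _); lia.
Qed.

End GridEdges.

Definition starts_run (q : seq point) (ab : point * point) : bool :=
  ~~ covers q (prev_edge ab).

Local Arguments steps : simpl never.

Lemma steps_cons2 (a b : point) (p : seq point) :
  steps [:: a, b & p] = (a, b) :: steps (b :: p).
Proof. by []. Qed.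

Lemma grid_walk_cons2 (a b : point) (p : seq point) :
  grid_walk [:: a, b & p] = grid_adj a b && grid_walk (b :: p).
Proof. by []. Qed.

Lemma bends_cons3 (a b c : point) (p : seq point) :
  bends [:: a, b, c & p] = (dir a b != dir b c) + bends [:: b, c & p].
Proof. by []. Qed.

(* [p] is a final piece of [q]; the extra summand counts a straight run of [q]
   that enters [p] from below through its first step, whose start lies before
   [p]. *)
Lemma count_starts_run_suffix (q p : seq point) :
  {subset steps p <= steps q} -> grid_walk p ->
  count (starts_run q) (steps p)
    + (if p is a :: b :: _ then (height a < height b)%R && ~~ starts_run q (a, b)
       else false)
  <= (bends p).+1.
Proof.
elim: p => [|a [|b [|c p]] IH] // sub walk.
  by rewrite steps_cons2 /= addn0; case: starts_run; rewrite ?andbT ?andbF /= ?leq_b1.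
move: walk; rewrite grid_walk_cons2 => /andP [ab walk'].
have sub' : {subset steps [:: b, c & p] <= steps q}.
  by move=> x x_in; apply: sub; rewrite steps_cons2 inE x_in orbT.
have {IH} := IH sub' walk'; rewrite bends_cons3 !steps_cons2 /=.
have abq : (a, b) \in steps q by apply: sub; rewrite steps_cons2 mem_head.
have bcq : (b, c) \in steps q by apply: sub'; rewrite steps_cons2 mem_head.
have [straight|] /= := eqVneq (dir a b) (dir b c); last first.
  by case: (starts_run q (a, b)); case: (starts_run q (b, c)); rewrite ?andbT ?andbF; lia.
case/orP: (grid_adj_height ab) => h.
- have bc_not_start : ~~ starts_run q (b, c).
    by rewrite /starts_run (prev_edge_straight_up straight h) /covers abq.
  have hbc : (height b < height c)%R.
    by move: straight h; rewrite /dir /height /= => -[]; lia.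
  by rewrite h hbc bc_not_start /=; case: (starts_run q (a, b)); lia.
- have ab_not_start : ~~ starts_run q (a, b).
    by rewrite /starts_run (prev_edge_straight_down straight h) /covers bcq orbT.
  have ab_down : (height a < height b)%R = false by rewrite ltNge (ltW h).
  by rewrite ab_down (negbTE ab_not_start) /=; lia.
Qed.

Lemma count_starts_run (q : seq point) :
  grid_walk q -> count (starts_run q) (steps q) <= (bends q).+1.
Proof.
move=> walk; apply: leq_trans (count_starts_run_suffix (fun _ x => x) walk).
exact: leq_addr.
Qed.

Lemma seq_argmin (d : Order.disp_t) (X : eqType) (R : orderType d) (f : X -> R)
    (s : seq X) :
  s != [::] -> exists2 x, x \in s & forall y, y \in s -> (f x <= f y)%O.
Proof.
elim: s => [//|a [|b s] IH] _.
  by exists a => [|y]; rewrite ?inE // => /eqP ->.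
have [x xs xmin] := IH isT.
have [fax|fxa] := leP (f a) (f x).
- exists a => [|y]; first exact: mem_head.
  by rewrite in_cons => /predU1P [-> //|/xmin]; exact: le_trans.
- exists x => [|y]; first by rewrite in_cons xs orbT.
  by rewrite in_cons => /predU1P [->|/xmin //]; exact: ltW.
Qed.

Lemma covers_rev (q : seq point) (a b : point) : covers q (b, a) = covers q (a, b).
Proof. by rewrite /covers /= orbC. Qed.

Lemma covers_steps (q : seq point) (ab : point * point) : ab \in steps q -> covers q ab.
Proof. by rewrite /covers => ->. Qed.

Lemma share_edge_covers (p q : seq point) (ab : point * point) :
  covers p ab -> covers q ab -> share_edge p q.
Proof.
case: ab => a b /orP [ab_p|ba_p] q_ab; apply/hasP; first by exists (a, b).
by exists (b, a); rewrite //= -/(covers q (b, a)) covers_rev.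
Qed.

Definition charges (p q : seq point) : bool :=
  has (fun y => starts_run p y && covers q y) (steps p).

Lemma share_edge_charges (p q : seq point) :
  grid_walk p -> share_edge p q -> charges p q || charges q p.
Proof.
move=> walk /hasP [y0 y0p y0q].
set shared := [seq y <- steps p | covers q y].
have y0_shared : y0 \in shared by rewrite mem_filter y0p andbT; exact: y0q.
have : shared != [::] by apply: contraTneq y0_shared => ->.
case/(seq_argmin edge_height) => -[a b].
rewrite mem_filter => /andP [q_ab p_ab] ab_min.
have ab : grid_adj a b := allP walk _ p_ab.
case p_prev: (covers p (prev_edge (a, b))); last first.
  by apply/orP; left; apply/hasP; exists (a, b); rewrite //= /starts_run p_prev.
have no_lower_shared cd : cd \in steps p -> covers q cd ->
    ~ (edge_height cd < edge_height (a, b))%R.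
  move=> cd_p q_cd /lt_le_trans/(_ (ab_min cd _)).
  by rewrite mem_filter q_cd cd_p ltxx => /(_ isT).
have q_prev : ~~ covers q (prev_edge (a, b)).
  apply/negP; have := edge_height_prev ab.
  case: prev_edge p_prev => c d /orP [cd_p|dc_p] lower q_cd.
  - exact: no_lower_shared lower.
  - apply: (no_lower_shared _ dc_p); first by rewrite covers_rev.
    by rewrite -(edge_height_rev (allP walk _ dc_p)).
apply/orP; right; apply/hasP.
case/orP: q_ab => [ab_q|ba_q]; [exists (a, b) | exists (b, a)] => //.
- by rewrite /starts_run q_prev covers_steps.
- by rewrite /starts_run prev_edge_rev // q_prev covers_rev covers_steps.
Qed.

Lemma card_bigcup_le_sum (I : eqType) (X : finType) (r : seq I) (Q : pred I)
    (F : I -> {set X}) :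
  #|\bigcup_(i <- r | Q i) F i| <= \sum_(i <- r | Q i) #|F i|.
Proof.
apply: (big_ind2 (fun (A : {set X}) n => #|A| <= n)); first by rewrite cards0.
  by move=> A1 n1 A2 n2 h1 h2; apply: leq_trans (leq_card_setU _ _) (leq_add h1 h2).
by [].
Qed.

Section EPGEdgeCount.

Variables (k : nat) (T : finType) (e : rel T) (P : T -> seq point).
Hypothesis e_irr : irreflexive e.
Hypothesis P_walk : forall u, grid_walk (P u).
Hypothesis P_bends : forall u, bends (P u) <= k.
Hypothesis P_model : forall u v, u != v -> (e u v <-> share_edge (P u) (P v)).

Definition others_covering (w : T) (y : point * point) : {set T} :=
  [set z | (z != w) && covers (P z) y].

Lemma card_others_covering w y :
  y \in steps (P w) -> #|others_covering w y| <= clique_number e - 1.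
Proof.
move=> y_w.
have w_out : w \notin others_covering w y by rewrite inE eqxx.
have clique : is_clique e (w |: others_covering w y).
  have covering z : z \in w |: others_covering w y -> covers (P z) y.
    by rewrite !inE => /predU1P [->|/andP []//]; exact: covers_steps.
  apply/forall_inP => x x_in; apply/forall_inP => x' x'_in; apply/implyP => x_x'.
  exact/(P_model x_x')/(share_edge_covers (covering _ x_in) (covering _ x'_in)).
have := @leq_bigmax_cond _ (is_clique e) (fun A : {set T} => #|A|) _ clique.
by rewrite -/(clique_number e) cardsU1 w_out; lia.
Qed.

Definition charged_edges (w : T) : {set {set T}} :=
  \bigcup_(y <- steps (P w) | starts_run (P w) y)
     [set [set w; z] | z in others_covering w y].

Lemma mem_charged_edges w z y :
  y \in steps (P w) -> starts_run (P w) y -> z != w -> covers (P z) y ->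
  [set w; z] \in charged_edges w.
Proof.
move=> y_w y_start z_w z_y; rewrite /charged_edges (big_rem y) //= y_start.
by rewrite in_setU; apply/orP; left; apply/imsetP; exists z; rewrite // inE z_w.
Qed.

Lemma card_charged_edges w : #|charged_edges w| <= (k + 1) * (clique_number e - 1).
Proof.
apply: leq_trans (card_bigcup_le_sum _ _ _) _.
apply: (@leq_trans (\sum_(y <- steps (P w) | starts_run (P w) y) (clique_number e - 1))).
  rewrite big_seq_cond [X in _ <= X]big_seq_cond; apply: leq_sum => y /andP [y_w _].
  exact: leq_trans (leq_imset_card _ _) (card_others_covering y_w).
rewrite big_const_seq iter_addn_0 mulnC leq_mul2r; apply/orP; right.
by apply: leq_trans (count_starts_run (P_walk w)) _; rewrite addn1 ltnS.
Qed.

Lemma edge_set_sub_charged : edge_set e \subset \bigcup_w charged_edges w.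
Proof.
apply/subsetP => A; rewrite inE => /existsP [x /existsP [y /andP [exy /eqP ->]]].
have x_y : x != y by apply: contraTneq exy => ->; rewrite e_irr.
have := share_edge_charges (P_walk x) ((P_model x_y).1 exy).
case/orP => /hasP [z z_in /andP [z_start z_cov]]; apply/bigcupP.
- by exists x => //; apply: (mem_charged_edges z_in z_start _ z_cov); rewrite eq_sym.
- by exists y; rewrite // setUC; exact: (mem_charged_edges z_in z_start x_y z_cov).
Qed.

Lemma num_edges_EPG : num_edges e <= (k + 1) * (clique_number e - 1) * #|T|.
Proof.
apply: leq_trans (subset_leq_card edge_set_sub_charged) _.
apply: leq_trans (card_bigcup_le_sum _ _ _) _.
apply: (@leq_trans (\sum_(w : T) (k + 1) * (clique_number e - 1))).
  by apply: leq_sum => w _; exact: card_charged_edges.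
by rewrite sum_nat_const mulnC.
Qed.

End EPGEdgeCount.

Theorem lemma12 (k : nat) (T : finType) (e : rel T) :
  simple_graph e -> Bk_EPG k e ->
  num_edges e <= (k + 1) * (clique_number e - 1) * #|T|.
Proof.
move=> [_ e_irr] [P [P_path P_model]].
by apply: (num_edges_EPG (P := P)) => // u; have [/and3P [_ _ walk] bends_k] := P_path u.
Qed.
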